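(* Let $(W,S)$ be a Coxeter system with $S$ finite and let $A_W=\langle a_s\ (s\in S)\mid (a_sa_t)_{m(s,t)}=(a_ta_s)_{m(s,t)}\ (s,t\in S,\ s\neq t,\ m(s,t)<\infty)\rangle$ be the associated Artin group. Then the assignment $a_s\mapsto e_s$ ($s\in S$) yields a well-defined surjective homomorphism $\psi:A_W\to\operatorname{Ad}(Q_W)$.
   Context: A Coxeter system $(W,S)$: $S$ finite, $m:S\times S\to\mathbb{N}\cup\{\infty\}$ with $m(s,s)=1$, $2\le m(s,t)=m(t,s)\le\infty$ for $s\ne t$, and $W=\langle s\in S\mid (st)^{m(s,t)}=1\ (m(s,t)<\infty)\rangle$. For group elements $g,h$ and an integer $m\ge2$, $(gh)_m$ denotes the alternating product $ghgh\cdots$ with $m$ factors. The Coxeter quandle $Q_W=\bigcup_{w\in W}w^{-1}Sw$ has operation $x\ast y=yxy$, and $\operatorname{Ad}(Q_W)=\langle e_x\ (x\in Q_W)\mid e_y^{-1}e_xe_y=e_{x\ast y}\ (x,y\in Q_W)\rangle$. *)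

From mathcomp Require Import all_boot.
Set Implicit Arguments. Unset Strict Implicit. Unset Printing Implicit Defensive.

(* A word in the free group on X: letters (x, b) with b = true meaning x^{-1}. *)
Definition word (X : Type) := seq (X * bool).

Definition winv (X : Type) (w : word X) : word X :=
  rev (map (fun p => (p.1, ~~ p.2)) w).

Inductive pres_eq (X : Type) (R : word X -> word X -> Prop) : word X -> word X -> Prop :=
| pe_refl w : pres_eq R w w
| pe_sym u v : pres_eq R u v -> pres_eq R v u
| pe_trans u v w : pres_eq R u v -> pres_eq R v w -> pres_eq R u w
| pe_rel u v a b : R a b -> pres_eq R (u ++ a ++ v) (u ++ b ++ v)
| pe_cancel u v x b : pres_eq R (u ++ [:: (x, b); (x, ~~ b)] ++ v) (u ++ v).

Fixpoint alt (X : Type) (g h : word X) (m : nat) : word X :=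
  if m is m'.+1 then g ++ alt h g m' else [::].

Definition gen (X : Type) (x : X) : word X := [:: (x, false)].

(* Coxeter matrix on a finite set S; None encodes m(s,t) = infinity. *)
Definition coxeter_matrix (S : finType) (m : S -> S -> option nat) : Prop :=
  (forall s, m s s = Some 1%N) /\
  (forall s t, m s t = m t s) /\
  (forall s t k, s != t -> m s t = Some k -> 2 <= k).

Definition coxeter_rel (S : finType) (m : S -> S -> option nat)
  (a b : word S) : Prop :=
  exists s t k, m s t = Some k /\ a = alt (gen s) (gen t) (2 * k) /\ b = [::].

Definition W_eq S m := pres_eq (@coxeter_rel S m).

Definition artin_rel (S : finType) (m : S -> S -> option nat)
  (a b : word S) : Prop :=
  exists s t k, s != t /\ m s t = Some k /\
    a = alt (gen s) (gen t) k /\ b = alt (gen t) (gen s) k.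

Definition A_eq S m := pres_eq (@artin_rel S m).

(* Elements of Q_W are represented by pairs (w, s), standing for w^{-1} s w in W
   (w a word over S).  Every element of Q_W has such a representative. *)
Definition qrep (S : finType) := (word S * S)%type.

Definition qword (S : finType) (p : qrep S) : word S :=
  winv p.1 ++ gen p.2 ++ p.1.

(* Relations of Ad(Q_W), generators e_p indexed by representatives:
   - e_p = e_r whenever p and r represent the same element of Q_W;
   - e_y^{-1} e_x e_y = e_z whenever z represents x * y = y x y in W. *)
Definition ad_rel (S : finType) (m : S -> S -> option nat)
  (a b : word (qrep S)) : Prop :=
  (exists p r, W_eq m (qword p) (qword r) /\ a = gen p /\ b = gen r) \/
  (exists x y z, W_eq m (qword z) (qword y ++ qword x ++ qword y) /\
     a = [:: (y, true); (x, false); (y, false)] /\ b = gen z).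

Definition Ad_eq S m := pres_eq (@ad_rel S m).

Definition psi (S : finType) (w : word S) : word (qrep S) :=
  map (fun l => (([::] : word S, l.1), l.2)) w.

From mathcomp Require Import all_boot.
From Corelib Require Import Setoid Morphisms.
Set Implicit Arguments. Unset Strict Implicit. Unset Printing Implicit Defensive.

(* Since [a_s |-> e_s] is defined letterwise, it respects free cancellation,
   and it remains to check the braid relations in Ad(Q_W).  Repeated use of
   e_y^-1 e_x e_y = e_(y x y) gives e_t psi(g) = psi(g) e_(g^-1 t g) for every
   positive word g.  With A = (st)_k and x the last letter of (st)_(k+1), the
   element A^-1 t A of W is the alternating word of length 2k+1 centred at t,
   which equals x because (st)^(m(s,t)) = 1 and generators are involutions;
   hence psi((st)_(k+1)) = psi(A) e_x = e_t psi(A) = psi((ts)_(k+1)).  The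
   same conjugation formula writes each generator e_(w^-1 x w) as
   psi(w'^-1 a_x w'), where w' is w with all its letters made positive. *)

#[export] Hint Resolve pe_refl : core.

#[export] Instance pres_eq_Equivalence (X : Type) (R : word X -> word X -> Prop) :
  Equivalence (pres_eq R).
Proof. by split; [exact: pe_refl | exact: pe_sym | exact: pe_trans]. Qed.

Lemma winv_cat (X : Type) (u v : word X) : winv (u ++ v) = winv v ++ winv u.
Proof. by rewrite /winv map_cat rev_cat. Qed.

Lemma winvK (X : Type) : involutive (@winv X).
Proof.
move=> w; rewrite /winv -map_rev revK -map_comp.
by elim: w => //= [[x b] w ->]; rewrite negbK.
Qed.

Lemma map_fst_winv (X : Type) (w : word X) : map fst (winv w) = rev (map fst w).
Proof. by rewrite /winv map_rev -map_comp. Qed.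

Lemma pres_eq_ctx (X : Type) (R : word X -> word X -> Prop) u v a b :
  pres_eq R a b -> pres_eq R (u ++ a ++ v) (u ++ b ++ v).
Proof.
move=> Hab; elim: Hab u v => {a b} [w|a b _ IH|a b c _ IH1 _ IH2|u0 v0 a b Rab|u0 v0 x b] u v.
- reflexivity.
- by symmetry.
- by transitivity (u ++ b ++ v).
- have E z : u ++ (u0 ++ z ++ v0) ++ v = (u ++ u0) ++ z ++ v0 ++ v by rewrite !catA.
  by rewrite !E; apply: pe_rel.
- have E z : u ++ (u0 ++ z ++ v0) ++ v = (u ++ u0) ++ z ++ v0 ++ v by rewrite !catA.
  by rewrite E -[u0 ++ v0]/(u0 ++ [::] ++ v0) E; apply: pe_cancel.
Qed.

#[export] Instance pres_eq_cat_Proper (X : Type) (R : word X -> word X -> Prop) :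
  Proper (pres_eq R ==> pres_eq R ==> pres_eq R) cat.
Proof.
move=> a b Hab c d Hcd; transitivity (b ++ c).
- by have := pres_eq_ctx [::] c Hab.
- by have := pres_eq_ctx b [::] Hcd; rewrite !cats0.
Qed.

Section Presentation.
Variables (X : Type) (R : word X -> word X -> Prop).

Lemma pres_eq_rel a b : R a b -> pres_eq R a b.
Proof. by move=> Rab; have := pe_rel [::] [::] Rab; rewrite /= !cats0. Qed.

Lemma pres_eq_cancel x b : pres_eq R [:: (x, b); (x, ~~ b)] [::].
Proof. exact: (pe_cancel _ [::] [::]). Qed.

Lemma pres_eq_winv_l w : pres_eq R (winv w ++ w) [::].
Proof.
elim: w => [|[x b] w IH]; first reflexivity.
have -> : winv ((x, b) :: w) ++ (x, b) :: w =
          winv w ++ [:: (x, ~~ b); (x, ~~ ~~ b)] ++ w.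
  by rewrite -cat1s winv_cat -catA negbK.
by rewrite pres_eq_cancel.
Qed.

Lemma pres_eq_winv_r w : pres_eq R (w ++ winv w) [::].
Proof. by have := pres_eq_winv_l (winv w); rewrite winvK. Qed.

Lemma pres_eq_winv u v : pres_eq R u v -> pres_eq R (winv u) (winv v).
Proof.
move=> Huv; transitivity (winv u ++ v ++ winv v).
- by rewrite pres_eq_winv_r cats0.
- by rewrite -{1}Huv catA pres_eq_winv_l.
Qed.

Lemma pres_eq_commute_of_conj a b c :
  pres_eq R (winv c ++ a ++ c) b -> pres_eq R (a ++ c) (c ++ b).
Proof. by move=> <-; rewrite catA pres_eq_winv_r. Qed.

Lemma pres_eq_conj_of_commute a b c :
  pres_eq R (a ++ c) (c ++ b) -> pres_eq R (winv c ++ a ++ c) b.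
Proof. by move=> ->; rewrite catA pres_eq_winv_l. Qed.

End Presentation.

Definition wmap (X Y : Type) (f : X -> Y) (w : word X) : word Y :=
  map (fun l => (f l.1, l.2)) w.

Lemma wmap_cat (X Y : Type) (f : X -> Y) (u v : word X) :
  wmap f (u ++ v) = wmap f u ++ wmap f v.
Proof. exact: map_cat. Qed.

Lemma wmap_winv (X Y : Type) (f : X -> Y) (w : word X) :
  wmap f (winv w) = winv (wmap f w).
Proof. by rewrite /wmap /winv map_rev -!map_comp. Qed.

Section WordMap.
Variables (X Y : Type) (R : word X -> word X -> Prop) (R' : word Y -> word Y -> Prop).
Variable f : X -> Y.

Lemma pres_eq_wmap :
  (forall a b, R a b -> pres_eq R' (wmap f a) (wmap f b)) ->
  forall u v, pres_eq R u v -> pres_eq R' (wmap f u) (wmap f v).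
Proof.
move=> fR u v; elim=> {u v} [w|u v _ IH|u v w _ IH1 _ IH2|u v a b /fR fRab|u v x b].
- reflexivity.
- by symmetry.
- by transitivity (wmap f v).
- by rewrite !wmap_cat fRab.
- by rewrite !wmap_cat; exact: pres_eq_ctx (pres_eq_cancel _ _ _).
Qed.

Lemma wmap_generates :
  (forall y, exists c, pres_eq R' (gen y) (wmap f c)) ->
  forall w, exists u, pres_eq R' w (wmap f u).
Proof.
move=> fgen; elim=> [|[y b] w [u IHw]]; first by exists [::].
have [c Hc] := fgen y.
exists ((if b then winv c else c) ++ u); rewrite wmap_cat -IHw -cat1s.
case: b; last by rewrite -Hc.
by rewrite wmap_winv -(pres_eq_winv Hc).
Qed.

End WordMap.

Fixpoint altseq (T : Type) (s t : T) (n : nat) : seq T :=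
  if n is n'.+1 then s :: altseq t s n' else [::].

Lemma altseq_cat (T : Type) (s t : T) a b :
  altseq s t (a + b) = altseq s t a ++ (if odd a then altseq t s b else altseq s t b).
Proof. by elim: a s t => [|a IH] s t //=; rewrite IH; case: (odd a). Qed.

Lemma altseq_rcons (T : Type) (s t : T) n :
  altseq s t n.+1 = rcons (altseq s t n) (if odd n then t else s).
Proof. by rewrite -addn1 altseq_cat -cats1; case: (odd n). Qed.

Lemma rev_altseq (T : Type) (s t : T) n :
  rev (altseq s t n) = if odd n then altseq s t n else altseq t s n.
Proof.
elim: n s t => [|n IH] s t //.
rewrite [altseq _ _ _]/= rev_cons IH /=.
by case: (boolP (odd n)) => odd_n /=;
  rewrite -[RHS]/(altseq _ _ n.+1) altseq_rcons ?odd_n ?(negbTE odd_n).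
Qed.

Lemma altseq_palindrome (T : Type) (s t : T) k :
  rev (altseq s t k) ++ t :: altseq s t k =
  if odd k then altseq s t k.*2.+1 else altseq t s k.*2.+1.
Proof. by rewrite rev_altseq -addnn -addnS !altseq_cat; case: (odd k). Qed.

Definition posword (T : Type) (g : seq T) : word T := map (fun s => (s, false)) g.

Lemma map_fst_posword (T : Type) (g : seq T) : map fst (posword g) = g.
Proof. by rewrite -map_comp map_id. Qed.

Lemma alt_gen (T : Type) (s t : T) n : alt (gen s) (gen t) n = posword (altseq s t n).
Proof. by elim: n s t => [|n IH] s t //=; rewrite IH. Qed.

(* [psi] unfolds to [wmap qgen]. *)
Definition qgen (S : finType) (s : S) : qrep S := ([::], s).

Section Coxeter.
Variables (S : finType) (m : S -> S -> option nat).
Hypothesis m_diag : forall s, m s s = Some 1%N.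
Hypothesis m_sym : forall s t, m s t = m t s.

Lemma W_eq_gen_sq s : W_eq m (gen s ++ gen s) [::].
Proof. by apply: pres_eq_rel; exists s, s, 1%N. Qed.

Lemma W_eq_gen_inv s : W_eq m [:: (s, true)] (gen s).
Proof.
transitivity ([:: (s, true)] ++ gen s ++ gen s); first by rewrite W_eq_gen_sq.
exact: (pres_eq_ctx [::] (gen s) (pres_eq_cancel _ s true)).
Qed.

Lemma W_eq_letters u v : map fst u = map fst v -> W_eq m u v.
Proof.
elim: u v => [|[x b] u IH] [|[y c] v] //= => [_|[<- /IH Huv]]; first reflexivity.
rewrite -cat1s -[_ :: v]cat1s Huv.
have W_eq_gen_sign d : W_eq m [:: (x, d)] (gen x) by case: d; rewrite ?W_eq_gen_inv.
by rewrite !W_eq_gen_sign.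
Qed.

Lemma W_eq_altseq_odd s t n :
  m s t = Some n.+1 -> W_eq m (posword (altseq s t n.*2.+1)) (gen t).
Proof.
move=> mst; have rel : W_eq m (posword (altseq s t n.*2.+1) ++ gen t) [::].
  apply: pres_eq_rel; exists s, t, n.+1; split=> //; split=> //.
  rewrite alt_gen mul2n doubleS [in RHS]altseq_rcons /= odd_double.
  by rewrite /posword map_rcons cats1.
transitivity (posword (altseq s t n.*2.+1) ++ gen t ++ gen t).
  by rewrite W_eq_gen_sq cats0.
by rewrite catA rel.
Qed.

Lemma Ad_eq_commute_gen (p : qrep S) s :
  Ad_eq m (gen p ++ gen (qgen s)) (gen (qgen s) ++ gen (p.1 ++ gen s, p.2)).
Proof.
apply/pres_eq_commute_of_conj/pres_eq_rel; right.
exists p, (qgen s), (p.1 ++ gen s, p.2); split=> //; apply: W_eq_letters.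
by rewrite /qword /= !map_cat !map_fst_winv map_cat rev_cat /= -!catA map_cat.
Qed.

Lemma Ad_eq_commute_posword (g : seq S) (p : qrep S) :
  Ad_eq m (gen p ++ wmap (@qgen S) (posword g))
          (wmap (@qgen S) (posword g) ++ gen (p.1 ++ posword g, p.2)).
Proof.
elim: g p => [|s g IH] p; first by case: p => w x; rewrite /= cats0.
have -> : gen p ++ wmap (@qgen S) (posword (s :: g)) =
          (gen p ++ gen (qgen s)) ++ wmap (@qgen S) (posword g) by [].
by rewrite Ad_eq_commute_gen -catA IH -!catA.
Qed.

Lemma W_eq_conj_altseq s t k :
  m s t = Some k.+1 ->
  W_eq m (qword (posword (altseq s t k), t)) (gen (if odd k then t else s)).
Proof.
move=> mst.
transitivity (posword (if odd k then altseq s t k.*2.+1 else altseq t s k.*2.+1)).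
  apply: W_eq_letters.
  by rewrite /qword !map_cat map_fst_winv !map_fst_posword -altseq_palindrome.
by case: (odd k); apply: W_eq_altseq_odd; rewrite // m_sym.
Qed.

Lemma Ad_eq_braid s t k :
  m s t = Some k ->
  Ad_eq m (wmap (@qgen S) (alt (gen s) (gen t) k))
          (wmap (@qgen S) (alt (gen t) (gen s) k)).
Proof.
case: k => [|k] mst; first reflexivity.
set A := altseq s t k; set x := if odd k then t else s.
have -> : alt (gen s) (gen t) k.+1 = posword A ++ gen x.
  by rewrite alt_gen altseq_rcons /posword map_rcons cats1.
have -> : alt (gen t) (gen s) k.+1 = gen t ++ posword A by rewrite alt_gen.
have conj_t : Ad_eq m (gen (posword A, t)) (gen (qgen x)).
  by apply: pres_eq_rel; left; exists (posword A, t), (qgen x); split=> //;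
    apply: W_eq_conj_altseq.
rewrite !wmap_cat -[wmap _ (gen t)]/(gen (qgen t)).
by rewrite Ad_eq_commute_posword conj_t.
Qed.

Lemma Ad_eq_gen_wmap (p : qrep S) : exists c, Ad_eq m (gen p) (wmap (@qgen S) c).
Proof.
case: p => w x; set g := map fst w.
exists (winv (posword g) ++ gen x ++ posword g); rewrite !wmap_cat wmap_winv.
transitivity (gen (posword g, x)).
  apply: pres_eq_rel; left; exists (w, x), (posword g, x); split=> //.
  by apply: W_eq_letters; rewrite /qword !map_cat !map_fst_winv map_fst_posword.
symmetry; apply: pres_eq_conj_of_commute.
exact: (Ad_eq_commute_posword g (qgen x)).
Qed.

End Coxeter.

Theorem proposition3p3 (S : finType) (m : S -> S -> option nat) :
  coxeter_matrix m ->
  (forall u v : word S, A_eq m u v -> Ad_eq m (psi u) (psi v)) /\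
  (forall w : word (qrep S), exists u : word S, Ad_eq m w (psi u)).
Proof.
case=> m_diag [m_sym _]; split.
- apply: (pres_eq_wmap (f := @qgen S)) => _ _ [s [t [k [_ [mst [-> ->]]]]]].
  exact: Ad_eq_braid.
- exact: (wmap_generates (f := @qgen S)) (Ad_eq_gen_wmap m_diag).
Qed.
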